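(* For $n\ge0$ let $\overline{I_n}:=I-I_n\in\Gamma$. The set $S=\{\overline{I_n}\mid n\ge0\}$ is a left denominator set in $\Gamma$, i.e. $I\in S$, $S\cdot S\subset S$, and (i) for every $\overline{I_n}\in S$ and $E\in\Gamma$ there are $\overline{I_m}\in S$ and $E'\in\Gamma$ with $E'\overline{I_n}=\overline{I_m}E$; (ii) if $\overline{I_n}\in S$ and $E\in\Gamma$ satisfy $E\overline{I_n}=0$, then there is $\overline{I_m}\in S$ with $\overline{I_m}E=0$. Moreover, the localized $k$-algebra $\Gamma[S^{-1}]$ (of left fractions) is naturally isomorphic to $\Sigma=\Gamma/M_\infty$.
   Context: $k$ is a commutative ring; matrices are indexed by $\mathbb{N}=\{1,2,\dots\}$. $\Gamma$ is the unital $k$-algebra of $\mathbb{N}\times\mathbb{N}$ matrices over $k$ having only finitely many distinct entries and such that for some $n_A$ every row and column has at most $n_A$ nonzero entries; $I$ is the identity matrix. $M_\infty\subset\Gamma$ is the two-sided ideal of matrices with finitely many nonzero entries, and $\Sigma:=\Gamma/M_\infty$. For $n\ge0$, $I_n$ is the matrix with $(I_n)_{i,j}=1$ if $i=j\le n$ and $0$ otherwise (so $I_0=0$). *)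

(* N x N matrices over k are modelled as functions
   nat -> nat -> k, with the paper's index i in N = {1,2,...} represented
   by the nat i-1 (0-based). *)
From HB Require Import structures.
From mathcomp Require Import all_boot all_order all_algebra.
From Stdlib Require Import ClassicalEpsilon.
Set Implicit Arguments. Unset Strict Implicit. Unset Printing Implicit Defensive.
Import GRing.Theory.
Local Open Scope ring_scope.

Section Mats.
Variable k : comPzRingType.

Definition mat := nat -> nat -> k.

(* Sum of a function nat -> k with finite support (0 if the support is
   infinite; this case never arises for the products considered here). *)
Definition fsum (f : nat -> k) : k :=
  match excluded_middle_informative (exists n, forall j, (n <= j)%N -> f j = 0) with
  | left H => \sum_(j < proj1_sig (constructive_indefinite_description _ H)) f j
  | right _ => 0
  end.

Definition mzero : mat := fun _ _ => 0.
Definition mid : mat := fun i j => if i == j then 1 else 0.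
Definition madd (A B : mat) : mat := fun i j => A i j + B i j.
Definition mopp (A : mat) : mat := fun i j => - A i j.
Definition msub (A B : mat) : mat := madd A (mopp B).
Definition mmul (A B : mat) : mat := fun i l => fsum (fun j => A i j * B j l).

Definition is_Gamma (A : mat) : Prop :=
  (exists vals : seq k, forall i j, A i j \in vals) /\
  (exists nA : nat,
     (forall i (s : seq nat), uniq s -> (forall j, j \in s -> A i j != 0) ->
        (size s <= nA)%N) /\
     (forall j (s : seq nat), uniq s -> (forall i, i \in s -> A i j != 0) ->
        (size s <= nA)%N)).

Definition is_Minf (A : mat) : Prop :=
  exists n : nat, forall i j, (n <= i)%N \/ (n <= j)%N -> A i j = 0.

(* I_n : ones at the diagonal positions 1..n (0-based: i < n). *)
Definition Imat (n : nat) : mat := fun i j => if (i == j) && (i < n)%N then 1 else 0.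
Definition Ibar (n : nat) : mat := msub mid (Imat n).

Definition Gamma_ring_hom (R : pzRingType) (f : mat -> R) : Prop :=
  (forall A B, is_Gamma A -> is_Gamma B -> f (madd A B) = f A + f B) /\
  (forall A B, is_Gamma A -> is_Gamma B -> f (mmul A B) = f A * f B) /\
  f mid = 1.

Definition S_inverting (R : pzRingType) (f : mat -> R) : Prop :=
  forall n, exists y : R, y * f (Ibar n) = 1 /\ f (Ibar n) * y = 1.

(* A ring hom f : Gamma -> R factors (necessarily uniquely, as the quotient
   map pi : Gamma -> Sigma is surjective) through a ring hom
   Sigma = Gamma/M_inf -> R  iff  f vanishes on M_inf. *)
Definition factors_through_Sigma (R : pzRingType) (f : mat -> R) : Prop :=
  forall A, is_Gamma A -> is_Minf A -> f A = 0.

(* The image pi(Ibar n) of Ibar n in Sigma is a unit of Sigma: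
   there is E in Gamma with E*Ibar n = I and Ibar n*E = I modulo M_inf. *)
Definition Sigma_inverts_S : Prop :=
  forall n, exists E, is_Gamma E /\
    is_Minf (msub (mmul E (Ibar n)) mid) /\ is_Minf (msub (mmul (Ibar n) E) mid).

End Mats.

Arguments mzero {k}.
Arguments mid {k}.
Arguments Imat {k} n.
Arguments Ibar {k} n.
Arguments Sigma_inverts_S k : clear implicits.

(* Left multiplication by [Ibar n] kills the first [n] rows of a matrix and
   right multiplication kills its first [n] columns.  A column of a matrix
   of Gamma has boundedly many nonzero entries, hence finite support; so the
   first [n] columns of [E] vanish below some row [m], and [E' := Ibar m E]
   witnesses both Ore conditions.  Finally [Ibar n] is invertible modulo
   M_inf since [I - Ibar n = I_n] is finitary, while every finitary [A]
   satisfies [Ibar n A = 0] for large [n]; hence any ring map inverting all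
   [Ibar n] kills M_inf. *)
From HB Require Import structures.
From mathcomp Require Import all_boot all_order all_algebra.
From Stdlib Require Import FunctionalExtensionality ClassicalEpsilon.
Set Implicit Arguments. Unset Strict Implicit. Unset Printing Implicit Defensive.
Import GRing.Theory.
Local Open Scope ring_scope.

Lemma bounded_pred_of_uniq_size_bounded (P : pred nat) N :
  (forall s, uniq s -> (forall i, i \in s -> P i) -> (size s <= N)%N) ->
  exists m, forall i, (m <= i)%N -> ~~ P i.
Proof.
elim: N P => [|N IH] P Hsize.
  exists 0%N => i _; apply/negP => Pi.
  suff : (size [:: i] <= 0)%N by [].
  by apply: Hsize => // x; rewrite inE => /eqP ->.
case: (classic (exists i0, P i0)) => [[i0 Pi0] | noP]; last first.
  by exists 0%N => i _; apply/negP => Pi; apply: noP; exists i.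
have [s us Hs | m Hm] := IH [pred i | P i && (i != i0)].
  rewrite -ltnS.
  have i0_notin_s : i0 \notin s by apply/negP => /Hs /=; rewrite eqxx andbF.
  apply: (Hsize (i0 :: s)); first by rewrite /= i0_notin_s.
  by move=> i; rewrite inE => /orP[/eqP -> // | /Hs /andP[]].
exists (maxn m i0.+1) => i; rewrite geq_max => /andP[/Hm /= + lt_i0_i].
by rewrite gtn_eqF // andbT.
Qed.

Section FiniteSums.
Variable k : comPzRingType.

Lemma big_ord_widen_vanishing (f : nat -> k) N P : (N <= P)%N ->
  (forall j, (N <= j)%N -> f j = 0) -> \sum_(j < N) f j = \sum_(j < P) f j.
Proof.
move=> NP f_vanish; rewrite (big_ord_widen P f NP) big_mkcond.
by apply: eq_bigr => j _; case: ltnP => // /f_vanish ->.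
Qed.

Lemma fsumE (f : nat -> k) M : (forall j, (M <= j)%N -> f j = 0) ->
  fsum f = \sum_(j < M) f j.
Proof.
move=> HM; rewrite /fsum; case: excluded_middle_informative => [H | H]; last first.
  by exfalso; apply: H; exists M.
case: constructive_indefinite_description => N HN /=.
rewrite (big_ord_widen_vanishing (leq_maxl N M) HN).
by rewrite (big_ord_widen_vanishing (leq_maxr N M) HM).
Qed.

Lemma fsum1 (f : nat -> k) i : (forall j, j != i -> f j = 0) -> fsum f = f i.
Proof.
move=> Hf; rewrite (@fsumE f i.+1) => [|j Hj]; last by rewrite Hf // gtn_eqF.
by rewrite big_ord_recr /= big1 ?add0r // => j _; rewrite Hf // ltn_eqF.
Qed.

End FiniteSums.

Section Gamma.
Variable k : comPzRingType.
Implicit Types (A E : mat k) (n m : nat).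

Lemma mat_ext A B : (forall i j, A i j = B i j) -> A = B.
Proof. by move=> H; do 2 apply: functional_extensionality => ?; apply: H. Qed.

Lemma IbarE n i j : @Ibar k n i j = if (i == j) && (n <= i)%N then 1 else 0.
Proof.
rewrite /Ibar /msub /madd /mopp /mid /Imat; case: eqP => _ /=; last by rewrite oppr0 addr0.
by case: ltnP => _ /=; rewrite ?subrr ?oppr0 ?addr0.
Qed.

Lemma mmul_Ibar_l n A i j : mmul (Ibar n) A i j = if (n <= i)%N then A i j else 0.
Proof.
rewrite /mmul (fsum1 (i := i)) => [|l Hl]; last by rewrite IbarE eq_sym (negbTE Hl) mul0r.
by rewrite IbarE eqxx /=; case: ifP; rewrite ?mul1r ?mul0r.
Qed.

Lemma mmul_Ibar_r n A i j : mmul A (Ibar n) i j = if (n <= j)%N then A i j else 0.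
Proof.
rewrite /mmul (fsum1 (i := j)) => [|l Hl]; last by rewrite IbarE (negbTE Hl) mulr0.
by rewrite IbarE eqxx /=; case: ifP; rewrite ?mulr1 ?mulr0.
Qed.

Lemma Ibar0 : @Ibar k 0 = mid.
Proof. by apply: mat_ext => i j; rewrite IbarE /mid andbT; case: eqP. Qed.

Lemma mmul_Ibar n m : mmul (@Ibar k n) (Ibar m) = Ibar (maxn n m).
Proof.
apply: mat_ext => i j; rewrite mmul_Ibar_l !IbarE geq_max.
by case: (n <= i)%N; case: (i == j).
Qed.

Lemma is_Gamma_Ibar n : is_Gamma (@Ibar k n).
Proof.
split; first by exists [:: 0; 1] => i j; rewrite IbarE; case: ifP; rewrite !inE eqxx ?orbT.
exists 1%N; split=> [i s us Hs | j s us Hs].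
  apply: (@uniq_leq_size _ s [:: i] us) => l /Hs.
  by rewrite IbarE inE; case: ifP => [/andP[/eqP -> _] | _]; rewrite ?eqxx.
apply: (@uniq_leq_size _ s [:: j] us) => l /Hs.
by rewrite IbarE inE; case: ifP => [/andP[/eqP -> _] | _]; rewrite ?eqxx.
Qed.

Lemma is_Gamma_mmul_Ibar n E : is_Gamma E -> is_Gamma (mmul (Ibar n) E).
Proof.
move=> [[vals Hv] [nA [Hr Hc]]]; split.
  by exists (0 :: vals) => i j; rewrite mmul_Ibar_l; case: ifP; rewrite inE ?eqxx ?Hv ?orbT.
exists nA; split=> [i s us Hs | j s us Hs].
  by apply: (Hr i s us) => j /Hs; rewrite mmul_Ibar_l; case: ifP; rewrite ?eqxx.
by apply: (Hc j s us) => i /Hs; rewrite mmul_Ibar_l; case: ifP; rewrite ?eqxx.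
Qed.

Lemma Gamma_col_bounded E j : is_Gamma E ->
  exists m, forall i, (m <= i)%N -> E i j = 0.
Proof.
move=> [_ [nA [_ Hc]]].
have [m Hm] := bounded_pred_of_uniq_size_bounded (Hc j).
by exists m => i /Hm /negPn /eqP.
Qed.

Lemma Gamma_cols_bounded E n : is_Gamma E ->
  exists m, forall i j, (m <= i)%N -> (j < n)%N -> E i j = 0.
Proof.
move=> GE; elim: n => [|n [m Hm]]; first by exists 0%N.
have [m' Hm'] := Gamma_col_bounded n GE.
exists (maxn m m') => i j; rewrite geq_max => /andP[le_m_i le_m'_i].
by rewrite ltnS leq_eqVlt => /orP[/eqP -> | /Hm]; [apply: Hm' | apply].
Qed.

Lemma Gamma_left_Ore n E : is_Gamma E ->
  exists m E', is_Gamma E' /\ mmul E' (Ibar n) = mmul (Ibar m) E.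
Proof.
move=> GE; have [m Hm] := Gamma_cols_bounded n GE.
exists m, (mmul (Ibar m) E); split; first exact: is_Gamma_mmul_Ibar.
apply: mat_ext => i j; rewrite mmul_Ibar_r !mmul_Ibar_l.
by case: (leqP n j) => // lt_j_n; case: ifP => // le_m_i; rewrite Hm.
Qed.

Lemma Gamma_left_reversible n E : is_Gamma E -> mmul E (Ibar n) = mzero ->
  exists m, mmul (Ibar m) E = mzero.
Proof.
move=> GE EIbar0; have [m Hm] := Gamma_cols_bounded n GE.
exists m; apply: mat_ext => i j; rewrite mmul_Ibar_l /mzero.
case: ifP => // le_m_i; case: (ltnP j n) => [/(Hm _ _ le_m_i) // | le_n_j].
by have := congr1 (fun M => M i j) EIbar0; rewrite /= mmul_Ibar_r le_n_j.
Qed.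

Lemma is_Minf_Ibar_sub_mid n : is_Minf (msub (@Ibar k n) mid).
Proof.
exists n => i j Hij; rewrite /msub /madd /mopp /mid IbarE.
case: (eqVneq i j) Hij => [-> | _] /=; last by rewrite oppr0 addr0.
by case=> ->; rewrite subrr.
Qed.

Lemma Sigma_inverts_Ibar : Sigma_inverts_S k.
Proof.
move=> n; exists (Ibar 0); split; first exact: is_Gamma_Ibar.
by rewrite !mmul_Ibar max0n maxn0; split; apply: is_Minf_Ibar_sub_mid.
Qed.

Lemma mmul_Ibar_Minf A : is_Minf A -> exists n, mmul (Ibar n) A = mzero.
Proof.
move=> [n Hn]; exists n; apply: mat_ext => i j.
by rewrite mmul_Ibar_l; case: ifP => // le_n_i; apply: Hn; left.
Qed.

Lemma is_Gamma_zero : is_Gamma (@mzero k).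
Proof.
split; first by exists [:: 0] => i j; rewrite inE.
by exists 0%N; split=> [i | j] s us Hs; apply: (@uniq_leq_size _ s [::] us) => l /Hs;
  rewrite eqxx.
Qed.

Lemma Gamma_ring_hom0 (R : pzRingType) (f : mat k -> R) :
  Gamma_ring_hom f -> f mzero = 0.
Proof.
move=> [fD _]; have := fD _ _ is_Gamma_zero is_Gamma_zero.
have -> : madd mzero mzero = @mzero k by apply: mat_ext => i j; rewrite /madd addr0.
by move=> f0D; apply: (@addrI _ (f mzero)); rewrite addr0 -f0D.
Qed.

Lemma S_inverting_factors_through_Sigma (R : pzRingType) (f : mat k -> R) :
  Gamma_ring_hom f -> S_inverting f -> factors_through_Sigma f.
Proof.
move=> fhom finv A GA /mmul_Ibar_Minf [n IbarA0].
have [_ [fM _]] := fhom; have [y [yIbar _]] := finv n.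
rewrite -[f A]mul1r -yIbar -mulrA -fM ?IbarA0 ?Gamma_ring_hom0 ?mulr0 //.
exact: is_Gamma_Ibar.
Qed.

End Gamma.

Theorem proposition3p8 (k : comPzRingType) :
  (forall n, is_Gamma (@Ibar k n)) /\
  (exists n, Ibar n = @mid k) /\
  (forall n m, exists p, mmul (@Ibar k n) (Ibar m) = Ibar p) /\
  (forall n (E : mat k), is_Gamma E ->
     exists m (E' : mat k), is_Gamma E' /\ mmul E' (Ibar n) = mmul (Ibar m) E) /\
  (forall n (E : mat k), is_Gamma E -> mmul E (Ibar n) = @mzero k ->
     exists m, mmul (Ibar m) E = @mzero k) /\
  (* Gamma[S^-1] ~ Sigma: the quotient map pi : Gamma -> Sigma has the
     universal property of the localization Gamma[S^-1], i.e. pi inverts S, and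
     every S-inverting ring hom Gamma -> R factors (uniquely) through pi. *)
  (Sigma_inverts_S k /\
   forall (R : pzRingType) (f : mat k -> R),
     Gamma_ring_hom f -> S_inverting f -> factors_through_Sigma f).
Proof.
split; first exact: is_Gamma_Ibar.
split; first by exists 0%N; exact: Ibar0.
split; first by move=> n m; exists (maxn n m); exact: mmul_Ibar.
split; first exact: Gamma_left_Ore.
split; first exact: Gamma_left_reversible.
split; first exact: Sigma_inverts_Ibar.
exact: S_inverting_factors_through_Sigma.
Qed.
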